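(* Let $p$ be an odd prime and let $G$ be a quasi-powerful $p$-group. Then $G^{p^{i}}$ is a powerful $p$-group for all $i\ge 1$.
   Context: For an odd prime $p$, a finite $p$-group $G$ is powerful if $[G,G]\le G^{p}$, and $G$ is quasi-powerful if $G/Z(G)$ is powerful. $G^{p^{i}}=\langle g^{p^{i}}\mid g\in G\rangle$. *)

From mathcomp Require Import all_boot all_fingroup all_solvable.
Set Implicit Arguments. Unset Strict Implicit. Unset Printing Implicit Defensive.
Local Open Scope group_scope.

Definition pow_subgroup (gT : finGroupType) (G : {set gT}) (n : nat) : {set gT} :=
  <<[set x ^+ n | x in G]>>.

Definition powerful (p : nat) (gT : finGroupType) (G : {set gT}) : bool :=
  [~: G, G] \subset pow_subgroup G p.

Definition quasi_powerful (p : nat) (gT : finGroupType) (G : {group gT}) : bool :=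
  powerful p (G / 'Z(G)).

From mathcomp Require Import all_boot all_fingroup all_solvable.
Set Implicit Arguments. Unset Strict Implicit. Unset Printing Implicit Defensive.
Local Open Scope group_scope.

(* For a powerful p-group H with p odd, the
   Lubotzky-Mann argument gives [Mho^i(H), H] <= Mho^(i+1)(H) by induction on i:
   modulo K = Mho^(i+2)(H) [Mho^(i+1)(H), H, H], the subgroup Mho^(i+1)(H) has
   class at most 2 and exponent p, which forces the p-th powers of Mho^i(H) to
   be central; nilpotency of H then removes the correction term in K.
   Applied to G / Z(G) this gives [N, G] <= Z(G) Mho^1(N) for N = Mho^i(G).
   Modulo Mho^1(N), the group N has exponent p and [N, G] is central, so
   [u, y^(p^i)] = [u, y]^(p^i) = 1 for u in N and y in G: N centralises the
   generators of N = Mho^i(G), i.e. [N, N] <= Mho^1(N). *)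

Section MhoFacts.
Variable gT : finGroupType.
Implicit Types (p : nat) (N : {set gT}) (G : {group gT}).

Lemma pow_subgroup_Mho p G n :
  p.-group G -> pow_subgroup G (p ^ n) = 'Mho^n(G).
Proof. by move=> pG; rewrite (MhoE n pG). Qed.

Lemma powerful_Mho p G :
  p.-group G -> powerful p G = ([~: G, G] \subset 'Mho^1(G)).
Proof. by move=> pG; rewrite -(pow_subgroup_Mho 1 pG) expn1. Qed.

Lemma Mho_addn_sub n m G : 'Mho^(n + m)(G) \subset 'Mho^m('Mho^n(G)).
Proof.
rewrite gen_subG; apply/subsetP=> _ /imsetP[x /setIdP[Gx p_x] ->].
by rewrite expnD expgM Mho_p_elt ?Mho_p_elt ?groupX ?p_eltX.
Qed.

Lemma exponent_quotient_Mho1 p G :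
  p.-group G -> exponent (G / 'Mho^1(G)) %| p.
Proof.
move=> pG; apply/exponentP=> _ /morphimP[x Nx Gx ->].
have := Mho_p_elt 1 Gx (mem_p_elt pG Gx); rewrite expn1 => Mxp.
by rewrite -morphX // /= coset_id.
Qed.

Lemma cent_Mho_central_commg p G N n :
    p.-group G -> [~: N, G] \subset 'Z(G) -> exponent [~: N, G] %| p ^ n ->
  N \subset 'C('Mho^n(G)).
Proof.
move=> pG sRZ expR; rewrite (MhoE n pG) cent_gen.
apply/centsP=> u Nu _ /imsetP[y Gy ->].
have Ruy : [~ u, y] \in [~: N, G] by rewrite mem_commg.
have cyR : commute y [~ u, y].
  by apply: commute_sym; case/centerP: (subsetP sRZ _ Ruy) => _; apply.
by apply/commgP; rewrite commgX // (exponentP expR).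
Qed.

Lemma nil_sub_joing_commg (H A B : {group gT}) :
  nilpotent H -> A <| H -> B <| H -> A \subset B <*> [~: A, H] -> A \subset B.
Proof.
move=> nilH /andP[sAH nAH] /andP[_ nBH] sA_BR.
have nBA : A \subset 'N(B) := subset_trans sAH nBH.
have nBR : [~: A, H] \subset 'N(B).
  by rewrite (subset_trans _ nBH) // commg_subr (subset_trans sAH) ?normG.
rewrite -quotient_sub1 //; have [-> // | ntA] := eqVneq (A / B) 1.
have sAq : A / B \subset [~: A / B, H / B].
  by rewrite -quotientR // -(quotientYidl nBR) quotientS.
have nAqHq : H / B \subset 'N_(H / B)(A / B).
  by rewrite subsetI subxx quotient_norms.
have := nil_comm_properl (quotient_nil B nilH) (quotientS B sAH) ntA nAqHq.
by rewrite properE sAq andbF.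
Qed.

End MhoFacts.

Section OddPGroups.
Variable p : nat.
Hypothesis p_odd : odd p.

Lemma exponent_Mho_class2 gT (Q : {group gT}) n :
    p.-group Q -> 'Mho^n.+1(Q) = 1 -> nil_class 'Mho^n(Q) <= 2 ->
  exponent 'Mho^n(Q) %| p.
Proof.
move=> pQ Mn1 cl2; have pM := pgroupS (Mho_sub n Q) pQ.
apply: dvdn_trans (exponentS _) (exponent_Ohm1_class2 p_odd pM cl2).
rewrite (OhmE 1 pM) {1}(MhoE n pQ) gen_subG; apply/subsetP=> _ /imsetP[x Qx ->].
rewrite mem_gen //; apply/LdivP; split.
  exact: Mho_p_elt (mem_p_elt pQ Qx).
rewrite expn1 -expgM -expnSr; apply/set1gP.
by rewrite -Mn1 Mho_p_elt ?(mem_p_elt pQ).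
Qed.

Lemma Mho_succ_sub_center gT (Q : {group gT}) i :
    p.-group Q -> [~: 'Mho^i(Q), Q] \subset 'Mho^i.+1(Q) ->
    'Mho^i.+2(Q) = 1 -> [~: 'Mho^i.+1(Q), Q, Q] = 1 ->
  'Mho^i.+1(Q) \subset 'Z(Q).
Proof.
move=> pQ sRM Mi2 cRQ; set M := 'Mho^i.+1(Q).
have sMQ : M \subset Q := Mho_sub _ _.
have sRZ : [~: M, Q] \subset 'Z(Q).
  by rewrite subsetI commg_subr (subset_trans sMQ (normG Q)); apply/commG1P.
have expM : exponent M %| p.
  apply: exponent_Mho_class2 => //; rewrite nil_class2 subsetI der_sub /=.
  rewrite (subset_trans (commgS _ sMQ)) // (subset_trans sRZ) //.
  by rewrite (subset_trans (subsetIr _ _)) ?centS.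
rewrite /M (MhoE _ pQ) gen_subG; apply/subsetP=> _ /imsetP[x Qx ->].
set y := x ^+ (p ^ i); have My : y \in 'Mho^i(Q).
  exact: Mho_p_elt (mem_p_elt pQ Qx).
have Qy : y \in Q := subsetP (Mho_sub i Q) y My.
rewrite expnSr expgM -/y; apply/centerP; split=> [|h Qh]; first exact: groupX.
set c := [~ y, h]; have Mc : c \in M by rewrite (subsetP sRM) ?mem_commg.
have Zd : [~ c, y] \in 'Z(Q) by rewrite (subsetP sRZ) ?mem_commg.
have Md : [~ c, y] \in M.
  have sRMM : [~: M, Q] \subset M by rewrite commg_subl gFnorm.
  by rewrite (subsetP sRMM) ?mem_commg.
have [_ cdQ] := centerP _ _ Zd.
(* (y^p)^h = (y c)^p = y^p c^p [c, y]^'C(p, 2), where c and [c, y] lie in M,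
   which has exponent p, and p divides 'C(p, 2) because p is odd. *)
apply/commgP/conjg_fixP; rewrite conjXg conjg_mulR -/c.
have cyd : commute y [~ c, y] by apply/commute_sym/cdQ.
have ccd : commute c [~ c, y] by apply/commute_sym/cdQ/(subsetP sMQ).
rewrite expMg_Rmul //.
have p_dv_bin2 : p %| 'C(p, 2) by rewrite bin2odd ?dvdn_mulr.
rewrite (exponentP expM c Mc).
by rewrite (exponentP (dvdn_trans expM p_dv_bin2) _ Md) !mulg1.
Qed.

Lemma commg_Mho_sub_step gT (H : {group gT}) i :
    p.-group H -> [~: 'Mho^i(H), H] \subset 'Mho^i.+1(H) ->
  [~: 'Mho^i.+1(H), H] \subset 'Mho^i.+2(H).
Proof.
move=> pH sRi; set A := [~: _, H].
have nsAH : A <| H.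
  rewrite /normal commg_subr (subset_trans (Mho_sub _ _)) ?normG //.
  by rewrite normsR ?normG ?gFnorm.
pose K := ('Mho^i.+2(H) <*> [~: A, H])%G.
have nKH : H \subset 'N(K).
  by rewrite normsY ?gFnorm // normsR ?normG ?normal_norm.
have nKMho n : 'Mho^n(H) \subset 'N(K) := subset_trans (Mho_sub n H) nKH.
have nKA : A \subset 'N(K) := subset_trans (normal_sub nsAH) nKH.
have qMho n : 'Mho^n(H) / K = 'Mho^n(H / K) by exact: morphim_Mho.
apply: nil_sub_joing_commg (pgroup_nil pH) nsAH (gFnormal _ _) _.
rewrite -quotient_sub1 // quotientR // qMho subG1; apply/eqP/commG1P.
apply: subset_trans (subsetIr (H / K) _); apply: Mho_succ_sub_center.
- exact: quotient_pgroup.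
- by rewrite -!qMho -quotientR ?quotientS.
- by rewrite -qMho quotientS1 ?joing_subl.
by rewrite -qMho -!quotientR // quotientS1 ?joing_subr.
Qed.

Lemma powerful_commg_Mho gT (H : {group gT}) i :
  p.-group H -> powerful p H -> [~: 'Mho^i(H), H] \subset 'Mho^i.+1(H).
Proof.
move=> pH; rewrite powerful_Mho // => powH.
by elim: i => [|i IHi]; [rewrite Mho0 | apply: commg_Mho_sub_step].
Qed.

Lemma quasi_powerful_commg_Mho gT (G : {group gT}) i :
    p.-group G -> quasi_powerful p G ->
  [~: 'Mho^i(G), G] \subset 'Z(G) * 'Mho^i.+1(G).
Proof.
move=> pG qpG; have nZG := normal_norm (center_normal G).
have nZMho n : 'Mho^n(G) \subset 'N('Z(G)) := subset_trans (Mho_sub n G) nZG.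
have qMho n : 'Mho^n(G) / 'Z(G) = 'Mho^n(G / 'Z(G)) by exact: morphim_Mho.
have nZR : [~: 'Mho^i(G), G] \subset 'N('Z(G)).
  by rewrite (subset_trans _ nZG) // commg_subr (subset_trans (Mho_sub _ _)).
rewrite -quotientSK // quotientR // !qMho.
exact: powerful_commg_Mho (quotient_pgroup _ pG) qpG.
Qed.

End OddPGroups.

Theorem theorem2 (p : nat) (gT : finGroupType) (G : {group gT}) :
  prime p -> odd p -> p.-group G -> quasi_powerful p G ->
  forall i : nat, 1 <= i ->
    p.-group (pow_subgroup G (p ^ i)) /\ powerful p (pow_subgroup G (p ^ i)).
Proof.
move=> _ p_odd pG qpG i i_gt0; rewrite pow_subgroup_Mho //.
set N := 'Mho^i(G); have pN : p.-group N := pgroupS (Mho_sub i G) pG.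
split=> //; rewrite powerful_Mho //; set M := 'Mho^1(N).
have nMG : G \subset 'N(M) := normal_norm (gFnormal_trans _ (gFnormal _ G)).
have nMN : N \subset 'N(M) := subset_trans (Mho_sub i G) nMG.
have sRZM : [~: N, G] \subset 'Z(G) * M.
  apply: subset_trans (quasi_powerful_commg_Mho p_odd i pG qpG) _.
  by rewrite mulgS // -addn1 Mho_addn_sub.
have qN : N / M = 'Mho^i(G / M) by exact: morphim_Mho.
rewrite -quotient_cents2 // {2}qN.
apply: cent_Mho_central_commg (quotient_pgroup _ pG) _ _.
  rewrite -quotientR // (subset_trans (quotientS M sRZM)) // quotientMidr.
  exact: morphim_center.
have sRN : [~: N / M, G / M] \subset N / M.
  by rewrite commg_subl quotient_norms ?gFnorm.
apply: dvdn_trans (exponentS sRN) (dvdn_trans (exponent_quotient_Mho1 pN) _).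
by rewrite -{1}(expn1 p) dvdn_exp2l.
Qed.
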